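(* Let $P$ be a simplicial poset of rank $n+1$. Then $$\Theta(\Psi(P))=[n]!\cdot h(P),$$ where $h(P)$ is the $h$-polynomial of $P$.
   Context: A graded poset $P$ with minimum $\hat0$, maximum $\hat1$ and rank function $\rho$ is simplicial if for every $x<\hat1$ the interval $[\hat0,x]$ is isomorphic to the Boolean algebra of rank $\rho(x)$. For $P$ of rank $n+1$, let $f_0=1$ and, for $1\le i\le n$, $f_i$ be the number of elements of rank $i$; the $h$-polynomial is $h(P)=\sum_{i=0}^n f_i\, q^i(1-q)^{n-i}$. The $\mathbf{a}\mathbf{b}$-index is $\Psi(P)=\sum_{S\subseteq\{1,\dots,n\}} f_S\, v_S$, where for $S=\{s_1<\cdots<s_k\}$, $f_S$ is the number of chains $\hat0<x_1<\cdots<x_k<\hat1$ with $\rho(x_i)=s_i$, and $v_S=v_1\cdots v_n$ with $v_i=\mathbf{b}$ if $i\in S$, $v_i=\mathbf{a}-\mathbf{b}$ otherwise ($\mathbf{a},\mathbf{b}$ non-commuting variables). The Major MacMahon map $\Theta:\mathbb{Z}\langle\mathbf{a},\mathbf{b}\rangle\to\mathbb{Z}[q]$ is linear with $\Theta(u_1\cdots u_n)=\prod_{i:\,u_i=\mathbf{b}}q^i$ on monomials. $[m]=1+q+\cdots+q^{m-1}$, $[m]!=[m]\cdots[1]$, $[0]!=1$. *)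

From HB Require Import structures.
From mathcomp Require Import all_boot all_order all_algebra.
Set Implicit Arguments. Unset Strict Implicit. Unset Printing Implicit Defensive.
Import Order.TTheory GRing.Theory.

Section Defs.
Local Open Scope order_scope.
Context {d : Order.disp_t} {T : finTBPOrderType d}.

Definition covers (x y : T) : bool := (x < y) && [forall z, ~~ ((x < z) && (z < y))].

Definition graded (rk : T -> nat) : Prop :=
  rk \bot = 0%N /\ (forall x y, covers x y -> rk y = (rk x).+1).

Definition simplicial (rk : T -> nat) : Prop :=
  forall x : T, x < \top ->
    exists f : {set 'I_(rk x)} -> T,
      injective f /\
      (forall y : T, (\bot <= y <= x) <-> exists A, f A = y) /\
      (forall A B, (f A <= f B) = (A \subset B)).

Definition fnum (rk : T -> nat) (i : nat) : nat :=
  if i == 0%N then 1%N else #|[set x : T | rk x == i]|.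

(** f_S for S a subset of {1..n}, encoded as S : {set 'I_n} (i stands for i+1):
    chains \bot < x_1 < ... < x_k < \top with rk x_j = s_j *)
Definition fS (rk : T -> nat) (n : nat) (S : {set 'I_n}) : nat :=
  #|[set x : {ffun 'I_#|S| -> T} |
      [forall j : 'I_#|S|, (rk (x j) == (nat_of_ord (enum_val j)).+1)
                 && (\bot < x j) && (x j < \top)]
      && [forall j : 'I_#|S|, forall j' : 'I_#|S|, (j < j')%N ==> (x j < x j')]]|.
End Defs.

Local Open Scope ring_scope.

(** Elements of Z<a,b> as formal Z-linear combinations of words in {a,b};
    a letter is a bool: false = a, true = b. *)
Definition ncpoly := seq (int * seq bool).
Definition nc_a : ncpoly := [:: (1, [:: false])].
Definition nc_b : ncpoly := [:: (1, [:: true])].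
Definition nc_one : ncpoly := [:: (1, [::])].
Definition nc_scale (c : int) (p : ncpoly) : ncpoly := [seq (c * m.1, m.2) | m <- p].
Definition nc_add (p q : ncpoly) : ncpoly := p ++ q.
Definition nc_sub (p q : ncpoly) : ncpoly := p ++ nc_scale (-1) q.
Definition nc_mul (p q : ncpoly) : ncpoly :=
  [seq (m.1 * m'.1, m.2 ++ m'.2) | m <- p, m' <- q].
Definition nc_prod (ps : seq ncpoly) : ncpoly := foldr nc_mul nc_one ps.
Definition nc_sum (ps : seq ncpoly) : ncpoly := foldr nc_add [::] ps.

Definition Theta (p : ncpoly) : {poly int} :=
  \sum_(m <- p) m.1%:P * \prod_(i < size m.2 | nth false m.2 i) 'X^(i.+1).

Definition vS (n : nat) (S : {set 'I_n}) : ncpoly :=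
  nc_prod [seq (if i \in S then nc_b else nc_sub nc_a nc_b) | i <- enum 'I_n].

Definition abindex {d : Order.disp_t} {T : finTBPOrderType d} (rk : T -> nat) (n : nat)
  : ncpoly :=
  nc_sum [seq nc_scale (fS rk A)%:Z (vS A) | A <- enum {set 'I_n}].

Definition hpoly {d : Order.disp_t} {T : finTBPOrderType d} (rk : T -> nat) (n : nat)
  : {poly int} :=
  \sum_(i < n.+1) (fnum rk i)%:R * 'X^i * (1 - 'X) ^+ (n - i).

Definition qint (m : nat) : {poly int} := \sum_(i < m) 'X^i.
Definition qfact (m : nat) : {poly int} := \prod_(i < m) qint i.+1.

(* Grouping the chains 0 < x_1 < ... < x_k < 1 by their rank sets turns Theta(Psi(P)) into
   the sum over all chains C of prod_(1 <= i <= n) w_i(C), where w_i(C) = q^i if C meets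
   rank i and 1 - q^i otherwise.  Let F(x) be the analogous sum over the chains strictly
   between 0 and x.  Splitting off the largest element y of a nonempty chain gives
     F(x) = prod_(0 < i < rk x) (1 - q^i)
            + sum_(0 < y < x) F(y) q^(rk y) prod_(rk y < i < rk x) (1 - q^i).
   Below the top every interval [0, x] is Boolean, so it has binom(rk x, j) elements of
   rank j; with [j]! prod_(j < i <= m) (1 - q^i) = [m]! (1 - q)^(m - j) and the expansion
   of ((1 - q) + q)^(m+1), induction on the rank gives F(x) = [rk x]!.  At the top the
   same recursion counts the f_j elements of rank j and produces [n]! h(P). *)

From mathcomp Require Import all_boot all_order all_algebra.
From mathcomp Require Import ring.
Import Order.TTheory GRing.Theory.
Set Implicit Arguments. Unset Strict Implicit. Unset Printing Implicit Defensive.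

Section Graded.
Local Open Scope order_scope.
Context {d : Order.disp_t} {T : finTBPOrderType d} (rk : T -> nat).
Hypothesis grk : graded rk.

Lemma rk_bot : rk \bot = 0%N.
Proof. exact: grk.1. Qed.

Lemma rk_covers (x y : T) : covers x y -> rk y = (rk x).+1.
Proof. exact: grk.2. Qed.

Lemma rk_lt (x y : T) : x < y -> (rk x < rk y)%N.
Proof.
have [N] := ubnP #|[set w | x < w < y]|; elim: N x y => // N IH x y ltN xy.
have [/existsP [z /andP [xz zy]]|none] := boolP [exists z : T, (x < z) && (z < y)]; last first.
  suff /rk_covers -> : covers x y by [].
  apply/andP; split=> //; apply/forallP=> z.
  by apply: contra none => xzy; apply/existsP; exists z.
rewrite ltnS in ltN.
have shrink (u v : T) : x <= u -> u < v -> v <= y -> (u != x) || (v != y) ->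
    (#|[set w | (u < w)%O && (w < v)%O]| < N)%N.
  move=> xu uv vy uvxy; apply: leq_trans (proper_card _) ltN; apply/properP.
  split; first by apply/subsetP=> w; rewrite !inE => /andP [/(le_lt_trans xu) -> /lt_le_trans ->].
  case/orP: uvxy => [ux|vy'].
  - exists u; last by rewrite inE ltxx.
    by rewrite inE lt_neqAle eq_sym ux xu (lt_le_trans uv vy).
  - exists v; last by rewrite inE ltxx andbF.
    by rewrite inE (le_lt_trans xu uv) lt_neqAle vy' vy.
apply: (@ltn_trans (rk z)).
  by apply: (IH _ _ _ xz); apply: shrink (lexx x) xz (ltW zy) _; rewrite (lt_eqF zy) orbT.
by apply: (IH _ _ _ zy); apply: shrink (ltW xz) zy (lexx y) _; rewrite (gt_eqF xz).
Qed.

Lemma rk_le (x y : T) : x <= y -> (rk x <= rk y)%N.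
Proof. by rewrite le_eqVlt => /predU1P [-> //|/rk_lt /ltnW]. Qed.

Lemma rk_gt0 (x : T) : \bot < x -> (0 < rk x)%N.
Proof. by move/rk_lt; rewrite rk_bot. Qed.

Lemma rk_eq0 (x : T) : (rk x == 0%N) = (x == \bot).
Proof.
apply/idP/eqP => [rx0|->]; last by rewrite rk_bot.
by apply/eqP; apply: contraTT rx0; rewrite -lt0x -lt0n => /rk_gt0.
Qed.

Lemma comparable_rk_inj (x y : T) : (x <= y) || (y <= x) -> rk x = rk y -> x = y.
Proof.
move=> cmp rxy; apply/eqP; apply: contraT => xy.
case/orP: cmp => le.
  by have := @rk_lt x y; rewrite lt_neqAle xy le rxy ltnn => /(_ isT).
by have := @rk_lt y x; rewrite lt_neqAle eq_sym xy le rxy ltnn => /(_ isT).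
Qed.

Lemma comparable_rk_lt (x y : T) : (x <= y) || (y <= x) -> (rk x < rk y)%N -> x < y.
Proof.
case/orP => [xy|yx] rxy; last by move: (rk_le yx); rewrite leqNgt rxy.
by rewrite lt_neqAle xy andbT; apply: contraTneq rxy => ->; rewrite ltnn.
Qed.

Section BooleanInterval.
Variables (k : nat) (x : T) (f : {set 'I_k} -> T).
Hypothesis f_onto : forall y, \bot <= y <= x <-> exists A, f A = y.
Hypothesis f_mono : forall A B, (f A <= f B) = (A \subset B).

Let f_inj : injective f.
Proof. by move=> A B /eqP; rewrite eq_le !f_mono -eqEsubset => /eqP. Qed.

Let f_lt A B : (f A < f B) = (A \proper B).
Proof. by rewrite lt_def f_mono properEneq (inj_eq f_inj) eq_sym. Qed.

Let f_le_x A : f A <= x.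
Proof. by have /f_onto /andP [] : exists B, f B = f A by exists A. Qed.

Let f_set0 : f set0 = \bot.
Proof.
have [A fA] : exists A, f A = \bot by apply/f_onto; rewrite lexx le0x.
by apply/le_anti; rewrite le0x -fA f_mono sub0set.
Qed.

Let f_covers (A : {set 'I_k}) a : a \notin A -> covers (f A) (f (a |: A)).
Proof.
move=> aA; rewrite /covers f_lt properUr ?sub1set //=.
apply/forallP=> z; apply/negP=> /andP [Az za].
have [C fC] : exists C, f C = z.
  by apply/f_onto; rewrite le0x (le_trans (ltW za)).
move: Az za; rewrite -fC !f_lt => /proper_card AC /proper_card.
by rewrite cardsU1 aA ltnS leqNgt AC.
Qed.

Lemma rk_boolean A : rk (f A) = #|A|.
Proof.
have [m] := ubnP #|A|; elim: m A => // m IH A; rewrite ltnS => leAm.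
have [->|[a aA]] := set_0Vmem A; first by rewrite f_set0 rk_bot cards0.
rewrite -(setD1K aA) (rk_covers (f_covers (negbT (setD11 a A)))) IH.
  by rewrite [in RHS]cardsU1 setD11.
by apply: leq_trans leAm; rewrite (cardsD1 a A) aA.
Qed.

Lemma card_rank_boolean (j : nat) : #|[set y | (y <= x) && (rk y == j)]| = 'C(k, j).
Proof.
suff -> : [set y | (y <= x) && (rk y == j)] = f @: [set A : {set 'I_k} | #|A| == j].
  by rewrite card_imset // card_draws card_ord.
apply/setP=> y; rewrite inE; apply/andP/imsetP => [[yx /eqP <-]|[A]].
  have [A <-] : exists A, f A = y by apply/f_onto; rewrite le0x.
  by exists A; rewrite // inE rk_boolean.
by rewrite inE => /eqP cardA ->; rewrite f_le_x rk_boolean cardA.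
Qed.

End BooleanInterval.

Lemma card_rank_le (x : T) (j : nat) : simplicial rk -> x < \top ->
  #|[set y | (y <= x) && (rk y == j)]| = 'C(rk x, j).
Proof.
by move=> simp /simp [f [_ [f_onto f_mono]]]; apply: (card_rank_boolean f_onto f_mono).
Qed.

End Graded.

Section Chains.
Local Open Scope ring_scope.
Local Open Scope order_scope.
Context {d : Order.disp_t} {T : finTBPOrderType d} (rk : T -> nat).
Hypothesis grk : graded rk.

Definition is_chain (C : {set T}) : bool :=
  [forall a in C, forall b in C, (a <= b) || (b <= a)].

Lemma is_chainP (C : {set T}) :
  reflect {in C &, forall a b, (a <= b) || (b <= a)} (is_chain C).
Proof.
apply: (iffP forall_inP) => [chC a b aC bC | chC a aC].
  exact: (forall_inP (chC a aC)).
by apply/forall_inP => b; apply: chC.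
Qed.

Definition chains (x : T) : {set {set T}} :=
  [set C : {set T} | (C \subset [set y | \bot < y < x]) && is_chain C].

Definition greatest_in (C : {set T}) (y : T) : bool :=
  (y \in C) && (C \subset [set c | c <= y]).

Lemma chain_greatest (C : {set T}) : is_chain C -> C != set0 ->
  exists y, greatest_in C y.
Proof.
move=> /is_chainP chC /set0Pn [c0 c0C].
have [y yC ymax] := arg_maxnP rk c0C.
exists y; apply/andP; split=> //; apply/subsetP => c cC; rewrite inE.
case/orP: (chC c y cC yC) => // yc.
have /eqP rk_yc : rk y == rk c by rewrite eqn_leq (rk_le grk yc); apply: ymax.
by rewrite (comparable_rk_inj grk _ rk_yc) ?yc.
Qed.

Lemma greatest_in_unique (C : {set T}) y z :
  greatest_in C y -> greatest_in C z -> y = z.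
Proof.
move=> /andP [yC /subsetP Cy] /andP [zC /subsetP Cz].
by apply/le_anti; have := Cz y yC; have := Cy z zC; rewrite !inE => -> ->.
Qed.

Lemma is_chainS (B C : {set T}) : B \subset C -> is_chain C -> is_chain B.
Proof.
move=> /subsetP BC /is_chainP chC; apply/is_chainP => a b aB bB.
exact: chC (BC a aB) (BC b bB).
Qed.

Lemma is_chain_setU1 (y : T) (C : {set T}) :
  is_chain C -> {in C, forall c, c <= y} -> is_chain (y |: C).
Proof.
move=> /is_chainP chC Cy; apply/is_chainP => a b.
case/setU1P => [->|aC] /setU1P [->|bC]; rewrite ?lexx ?Cy ?orbT //.
exact: chC.
Qed.

Lemma chains_notin (y : T) (C : {set T}) : C \in chains y -> y \notin C.
Proof.
rewrite inE => /andP [/subsetP Cy _]; apply/negP => /Cy.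
by rewrite inE ltxx andbF.
Qed.

Lemma chains_setU1 (x y : T) (C : {set T}) : \bot < y < x -> C \in chains y ->
  (y |: C \in chains x) && greatest_in (y |: C) y.
Proof.
case/andP => by0 yx; rewrite !inE => /andP [/subsetP Cy chC].
have c_lt_y c : c \in C -> c < y by move/Cy; rewrite inE => /andP [].
rewrite /greatest_in setU11 /= -andbA; apply/and3P; split.
- apply/subsetP => c /setU1P [->|cC]; rewrite inE; first by rewrite by0 yx.
  by have := Cy c cC; rewrite !inE => /andP [-> /lt_trans ->].
- by apply: is_chain_setU1 => // c /c_lt_y /ltW.
- apply/subsetP => c /setU1P [->|/c_lt_y /ltW]; rewrite inE //.
Qed.

Lemma chains_setD1 (x y : T) (C : {set T}) : C \in chains x -> greatest_in C y ->
  C :\ y \in chains y.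
Proof.
rewrite !inE => /andP [/subsetP Cx chC] /andP [_ /subsetP Cy].
apply/andP; split; last exact: is_chainS (subD1set C y) chC.
apply/subsetP => c; rewrite !inE => /andP [cy cC].
have := Cx c cC; have := Cy c cC; rewrite !inE => c_le_y /andP [-> _].
by rewrite lt_neqAle cy.
Qed.

Definition hits_rank (C : {set T}) (i : nat) : bool := [exists c in C, rk c == i].

Lemma hits_rank_set0 i : hits_rank set0 i = false.
Proof. by apply/exists_inP => -[c]; rewrite inE. Qed.

Lemma hits_rank_setU1 (y : T) (C : {set T}) i :
  hits_rank (y |: C) i = (rk y == i) || hits_rank C i.
Proof.
apply/exists_inP/orP => [[c /setU1P [->|cC] ci]|[yi|/exists_inP [c cC ci]]].
- by left.
- by right; apply/exists_inP; exists c.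
- by exists y; rewrite ?setU11.
- by exists c; rewrite ?setU1r.
Qed.

Lemma hits_rank_chains (y : T) (C : {set T}) i :
  C \in chains y -> hits_rank C i -> (i < rk y)%N.
Proof.
rewrite inE => /andP [/subsetP Cy _] /exists_inP [c /Cy cy /eqP <-].
by move: cy; rewrite inE => /andP [_ /(rk_lt grk)].
Qed.

Definition chain_weight (m : nat) (C : {set T}) : {poly int} :=
  \prod_(1 <= i < m) (if hits_rank C i then 'X^i else 1 - 'X^i).

Definition chain_poly (x : T) : {poly int} := \sum_(C in chains x) chain_weight (rk x) C.

Lemma chain_weight_setU1 (x y : T) (C : {set T}) : \bot < y < x -> C \in chains y ->
  chain_weight (rk x) (y |: C) =
  chain_weight (rk y) C * 'X^(rk y) * \prod_((rk y).+1 <= i < rk x) (1 - 'X^i).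
Proof.
case/andP => by0 yx Cy.
have ry_gt0 : (0 < rk y)%N := rk_gt0 grk by0.
have ryx : (rk y < rk x)%N := rk_lt grk yx.
rewrite /chain_weight (big_cat_nat ry_gt0 (ltnW ryx)) /=.
rewrite [X in _ * X]big_ltn // hits_rank_setU1 eqxx mulrA.
congr (_ * _ * _); apply: eq_big_nat => i /andP [lo hi].
  by rewrite hits_rank_setU1 (gtn_eqF hi).
rewrite hits_rank_setU1 (ltn_eqF lo) /=.
case: ifP => // /(hits_rank_chains Cy) iy.
by move: (ltn_trans lo iy); rewrite ltnn.
Qed.

Lemma sum_greatest_in (R : nmodType) (x : T) (C : {set T}) (a : R) :
  C \in chains x -> C != set0 -> \sum_(y | (\bot < y < x) && greatest_in C y) a = a.
Proof.
rewrite inE => /andP [/subsetP Cx chC] C0.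
have [y Cy] := chain_greatest chC C0.
rewrite (big_pred1 y) // => z /=; apply/andP/eqP => [[_ Cz]|->].
  exact: greatest_in_unique Cz Cy.
by split=> //; case/andP: Cy => /Cx; rewrite inE.
Qed.

Lemma sum_chains_nonempty (R : nmodType) (x : T) (F : {set T} -> R) :
  \sum_(C in chains x | C != set0) F C = \sum_(y | \bot < y < x) \sum_(C in chains y) F (y |: C).
Proof.
under eq_bigr => C /andP [Cx C0] do rewrite -(sum_greatest_in (F C) Cx C0).
rewrite (exchange_big_dep (fun y => \bot < y < x)) /=; last by move=> C y _ /andP [].
apply: eq_bigr => y ybx.
rewrite (reindex_onto (fun C => y |: C) (fun C => C :\ y)) /=; last first.
  by move=> C /andP [_ /andP [_ /andP [yC _]]]; rewrite setD1K.
apply: eq_bigl => C; apply/idP/idP => [|Cy].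
  case/andP => /andP [/andP [Cx _] /andP [_ Cg]] /eqP <-.
  exact: chains_setD1 Cx Cg.
have /andP [-> ->] := chains_setU1 ybx Cy.
rewrite ybx setU1K ?chains_notin // eqxx !andbT.
by apply/set0Pn; exists y; rewrite setU11.
Qed.

Lemma chain_poly_rec (x : T) : chain_poly x = \prod_(1 <= i < rk x) (1 - 'X^i) +
  \sum_(y | \bot < y < x) chain_poly y * 'X^(rk y) * \prod_((rk y).+1 <= i < rk x) (1 - 'X^i).
Proof.
have set0_chain : set0 \in chains x.
  by rewrite inE sub0set; apply/is_chainP => ?; rewrite inE.
rewrite /chain_poly (bigD1 set0) //= sum_chains_nonempty; congr (_ + _).
  by apply: eq_bigr => i _; rewrite hits_rank_set0.
apply: eq_bigr => y ybx; rewrite !big_distrl /=.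
by apply: eq_bigr => C Cy; rewrite chain_weight_setU1.
Qed.

End Chains.

Local Open Scope ring_scope.

Lemma qfact0 : qfact 0 = 1.
Proof. by rewrite /qfact big_ord0. Qed.

Lemma qfactS m : qfact m.+1 = qfact m * qint m.+1.
Proof. by rewrite /qfact big_ord_recr. Qed.

Lemma qint_mul_oneX m : qint m * (1 - 'X) = 1 - 'X^m.
Proof.
elim: m => [|m IH]; first by rewrite /qint big_ord0 mul0r expr0 subrr.
by rewrite /qint big_ord_recr /= -/(qint m) mulrDl IH exprS; ring.
Qed.

Lemma qfact_mul_prod j k : (j <= k)%N ->
  qfact j * \prod_(j.+1 <= i < k.+1) (1 - 'X^i) = qfact k * (1 - 'X) ^+ (k - j).
Proof.
elim: k => [|k IH]; first by rewrite leqn0 => /eqP ->; rewrite big_geq.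
rewrite leq_eqVlt => /predU1P [->|]; first by rewrite big_geq // subnn.
rewrite ltnS => jk; rewrite big_nat_recr //= mulrA IH // qfactS -qint_mul_oneX.
by rewrite subSn // exprS; ring.
Qed.

Lemma oneX_neq0 : 1 - 'X != 0 :> {poly int}.
Proof.
apply/eqP => /(congr1 (fun p : {poly int} => p`_0)).
rewrite coefB coef1 coefX coef0 /= subr0.
by move/eqP; rewrite oner_eq0.
Qed.

Lemma qint_binomial m :
  \sum_(j < m.+1) 'C(m.+1, j)%:R * 'X^j * (1 - 'X) ^+ (m - j) = qint m.+1 :> {poly int}.
Proof.
apply: (mulIf oneX_neq0); rewrite qint_mul_oneX big_distrl /=.
have := exprDn (1 - 'X : {poly int}) 'X m.+1.
rewrite subrK expr1n big_ord_recr subnn expr0 binn mulr1n mul1r => expand.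
rewrite [in RHS]expand addrK; apply: eq_bigr => i _.
change (nat_of_ord (widen_ord (leqnSn m.+1) i)) with (nat_of_ord i).
rewrite subSn; last exact: ltn_ord i.
by rewrite exprSr -mulr_natl; ring.
Qed.

Section ChainPolyValue.
Context {d : Order.disp_t} {T : finTBPOrderType d} (rk : T -> nat).
Hypothesis grk : graded rk.
Local Open Scope order_scope.

Lemma sum_by_rank (R : nmodType) (m : nat) (P : pred T) (g : nat -> R) :
  (forall y, P y -> (rk y < m)%N) ->
  \sum_(y | P y) g (rk y) = \sum_(j < m) g j *+ #|[set y | P y && (rk y == j)]|.
Proof.
move=> Pm.
have rank_sum y : P y -> g (rk y) = \sum_(j < m | rk y == j) g j.
  by move=> Py; rewrite (big_pred1 (Ordinal (Pm y Py))) // => j; rewrite -val_eqE eq_sym.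
rewrite (eq_bigr _ rank_sum) (exchange_big_dep xpredT) //=; apply: eq_bigr => j _.
by rewrite -sumr_const; apply: eq_bigl => y; rewrite inE.
Qed.

Lemma chain_poly_bot : chain_poly rk \bot = 1.
Proof.
rewrite (chain_poly_rec grk) (rk_bot grk) big_geq // big_pred0 ?addr0 // => y.
by apply/negP => /andP [/lt_trans yb /yb]; rewrite ltxx.
Qed.

Lemma chain_poly_counts (x : T) m : rk x = m.+1 ->
    (forall y, y < x -> chain_poly rk y = qfact (rk y)) ->
  chain_poly rk x = qfact m *
    \sum_(j < m.+1) #|[set y | (y < x)%O && (rk y == j)]|%:R * 'X^j * (1 - 'X) ^+ (m - j).
Proof.
move=> rx IH.
have x_ne_bot : x != \bot by rewrite -(rk_eq0 grk) rx.
pose g j := qfact j * 'X^j * \prod_(j.+1 <= i < m.+1) (1 - 'X^i).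
have -> : chain_poly rk x = \sum_(y | y < x) g (rk y).
  rewrite (chain_poly_rec grk) [RHS](bigD1 \bot) ?lt0x //= /g rx (rk_bot grk) qfact0 !mul1r.
  congr (_ + _); apply: eq_big => [y|y /andP [_ yx]]; first by rewrite lt0x andbC.
  by rewrite IH.
rewrite (sum_by_rank (m := m.+1)) => [|y /(rk_lt grk)]; last by rewrite rx.
rewrite mulr_sumr; apply: eq_bigr => j _; rewrite /g.
by rewrite -[in LHS]mulr_natl [qfact j * _ * _]mulrAC (@qfact_mul_prod j m (ltn_ord j)); ring.
Qed.

Hypothesis simp : simplicial rk.

Lemma card_rank_lt (x : T) (j : nat) : x < \top -> (j < rk x)%N ->
  #|[set y | (y < x)%O && (rk y == j)]| = 'C(rk x, j).
Proof.
move=> xt jx; rewrite -(card_rank_le grk _ simp xt); apply: eq_card => y.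
by rewrite !inE lt_neqAle; case: eqP => [->|] //=; rewrite lexx (gtn_eqF jx).
Qed.

Lemma chain_poly_lt_top (x : T) : x < \top -> chain_poly rk x = qfact (rk x).
Proof.
have [N] := ubnP (rk x); elim: N x => // N IH x rxN xt.
case rx: (rk x) => [|m].
  by move/eqP: rx; rewrite (rk_eq0 grk) => /eqP ->; rewrite chain_poly_bot qfact0.
rewrite (chain_poly_counts rx) => [|y yx]; last first.
  by apply: IH (lt_trans yx xt); apply: leq_trans (rk_lt grk yx) _; rewrite -ltnS.
rewrite qfactS -qint_binomial; congr (_ * _); apply: eq_bigr => j _.
by rewrite card_rank_lt ?rx.
Qed.

Lemma card_rank_lt_top n (j : 'I_n.+1) : rk \top = n.+1 ->
  #|[set y | (y < \top) && (rk y == j)]| = fnum rk j.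
Proof.
move=> rt; rewrite /fnum; case: eqP => [j0|_].
  rewrite j0; apply/eqP/cards1P; exists \bot; apply/setP => y; rewrite !inE (rk_eq0 grk).
  by case: eqP => [->|]; rewrite ?andbT ?andbF // lt0x -(rk_eq0 grk) rt.
apply: eq_card => y; rewrite !inE.
case: eqP => [ryj|]; rewrite ?andbF // andbT lt_neqAle lex1 andbT.
by apply: contraTneq (ltn_ord j) => yt; rewrite -ryj yt rt ltnn.
Qed.

Lemma chain_poly_top n : rk \top = n.+1 -> chain_poly rk \top = qfact n * hpoly rk n.
Proof.
move=> rt; rewrite (chain_poly_counts rt) => [|y /chain_poly_lt_top //].
by congr (_ * _); apply: eq_bigr => j _; rewrite card_rank_lt_top.
Qed.

End ChainPolyValue.

(* [theta_from k] is [Theta] with every position shifted by [k]; the shift makes it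
   multiplicative over products whose left factor is a combination of single letters. *)
Definition theta_word (k : nat) (m : int * seq bool) : {poly int} :=
  m.1%:P * \prod_(i < size m.2) (if nth false m.2 i then 'X^(k + i.+1) else 1).

Definition theta_from (k : nat) (p : ncpoly) : {poly int} := \sum_(m <- p) theta_word k m.

Lemma Theta_theta_from p : Theta p = theta_from 0 p.
Proof. by apply: eq_bigr => m _; rewrite big_mkcond. Qed.

Lemma theta_from_sum k ps : theta_from k (nc_sum ps) = \sum_(p <- ps) theta_from k p.
Proof.
elim: ps => [|p ps IH]; first by rewrite /theta_from !big_nil.
by rewrite big_cons -IH /theta_from big_cat.
Qed.

Lemma theta_from_scale k c p : theta_from k (nc_scale c p) = c%:P * theta_from k p.
Proof.
rewrite /theta_from big_map mulr_sumr; apply: eq_bigr => m _.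
by rewrite /theta_word polyCM mulrA.
Qed.

Lemma theta_word_cons k c c' b w :
  theta_word k (c * c', b :: w) = theta_word k (c, [:: b]) * theta_word k.+1 (c', w).
Proof.
rewrite /theta_word /= polyCM big_ord_recl big_ord1 /=.
under eq_bigr => i _ do rewrite /bump /= add1n -addSnnS.
ring.
Qed.

Lemma theta_from_mul_letters k p q : all (fun m => size m.2 == 1%N) p ->
  theta_from k (nc_mul p q) = theta_from k p * theta_from k.+1 q.
Proof.
move=> /allP letters; rewrite /theta_from /nc_mul big_allpairs_dep big_distrl /=.
apply: eq_big_seq => m /letters; case: m => c [//|b [|//]] _ /=.
by rewrite mulr_sumr; apply: eq_bigr => -[c' w] _; rewrite theta_word_cons.
Qed.

Definition vletter (b : bool) : ncpoly := if b then nc_b else nc_sub nc_a nc_b.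

Lemma theta_from_vletter k b :
  theta_from k (vletter b) = if b then 'X^(k.+1) else 1 - 'X^(k.+1).
Proof.
rewrite /theta_from /theta_word.
by case: b; rewrite /= ?big_cons big_nil /= ?big_ord_recl ?big_ord0 /= addn1; ring.
Qed.

Lemma theta_from_vletters k s :
  theta_from k (nc_prod [seq vletter b | b <- s]) =
  \prod_(i < size s) (if nth false s i then 'X^(k + i.+1) else 1 - 'X^(k + i.+1)).
Proof.
elim: s k => [|b s IH] k.
  by rewrite big_ord0 /theta_from /theta_word big_seq1 big_ord0 mulr1.
rewrite /= theta_from_mul_letters; last by case: b.
rewrite IH theta_from_vletter big_ord_recl addn1; congr (_ * _).
by apply: eq_bigr => i _; rewrite addSnnS.
Qed.

Definition rank_weight (n : nat) (A : {set 'I_n}) : {poly int} :=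
  \prod_(i < n) (if i \in A then 'X^(i.+1) else 1 - 'X^(i.+1)).

Lemma Theta_vS n (A : {set 'I_n}) : Theta (vS A) = rank_weight A.
Proof.
rewrite Theta_theta_from /vS (_ : [seq _ | i <- enum 'I_n] =
  [seq vletter b | b <- [seq i \in A | i <- enum 'I_n]]); last by rewrite -map_comp.
rewrite theta_from_vletters size_map size_enum_ord.
apply: eq_bigr => i _; by rewrite (nth_map i) ?size_enum_ord // nth_ord_enum add0n.
Qed.

Lemma Theta_abindex {d : Order.disp_t} {T : finTBPOrderType d} (rk : T -> nat) n :
  Theta (abindex rk n) = \sum_(A : {set 'I_n}) (fS rk A)%:R * rank_weight A.
Proof.
rewrite Theta_theta_from theta_from_sum big_map big_enum /=.
by apply: eq_bigr => A _; rewrite theta_from_scale -Theta_theta_from Theta_vS -natz polyC_natr.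
Qed.

Lemma enum_val_ltn n (A : {set 'I_n}) (j j' : 'I_#|A|) :
  (j < j')%N -> (enum_val j < enum_val j')%N.
Proof.
have lt_trans : transitive (relpre (@nat_of_ord n) ltn) by move=> ? ? ? /ltn_trans; apply.
have sorted_A : sorted (relpre (@nat_of_ord n) ltn) (enum A).
  rewrite /enum_mem -enumT /= (sorted_filter lt_trans) //.
  by rewrite -sorted_map val_enum_ord iota_ltn_sorted.
move=> jj'; rewrite (enum_val_nth (enum_val j)) (enum_val_nth (enum_val j) j').
by apply: (sorted_ltn_nth lt_trans) => //; rewrite inE -cardE ltn_ord.
Qed.

Section Flags.
Local Open Scope order_scope.
Context {d : Order.disp_t} {T : finTBPOrderType d} (rk : T -> nat).
Hypothesis grk : graded rk.
Variable n : nat.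
Hypothesis rk_top : rk \top = n.+1.

(* As in [fS], the index [i : 'I_n] stands for the rank [i.+1]. *)
Definition rank_set (C : {set T}) : {set 'I_n} := [set i : 'I_n | hits_rank rk C i.+1].

Section FixedRankSet.
Variable A : {set 'I_n}.

Definition is_flag (x : {ffun 'I_#|A| -> T}) : bool :=
  [forall j : 'I_#|A|, (rk (x j) == (nat_of_ord (enum_val j)).+1) && (\bot < x j) && (x j < \top)]
  && [forall j : 'I_#|A|, forall j' : 'I_#|A|, (j < j')%N ==> (x j < x j')].

Lemma fS_flags : fS rk A = #|[set x | is_flag x]|.
Proof. by []. Qed.

Lemma is_flagP (x : {ffun 'I_#|A| -> T}) :
  reflect [/\ forall j, rk (x j) = (enum_val j).+1, forall j, \bot < x j < \top
            & forall j j' : 'I_#|A|, (j < j')%N -> x j < x j'] (is_flag x).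
Proof.
apply: (iffP andP) => [[/forallP rng /forallP mono]|[rkx rng mono]].
  split=> [j|j|j j' jj']; first by case/andP: (rng j) => /andP [/eqP].
    by case/andP: (rng j) => /andP [_ ->].
  exact: implyP (forallP (mono j) j') jj'.
split; apply/forallP => j; first by rewrite rkx eqxx -andbA rng.
by apply/forallP => j'; apply/implyP; apply: mono.
Qed.

Definition flag_chain (x : {ffun 'I_#|A| -> T}) : {set T} := [set x j | j : 'I_#|A|].

Lemma flag_chain_inj : {in is_flag &, injective flag_chain}.
Proof.
move=> x x' /is_flagP [rkx _ _] /is_flagP [rkx' _ _] eq_chain; apply/ffunP => j.
have /imsetP [j' _ xj] : x j \in flag_chain x' by rewrite -eq_chain imset_f.
rewrite xj; congr (x' _); apply/enum_val_inj/val_inj/succn_inj.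
by rewrite -(rkx j) -(rkx' j') xj.
Qed.

Lemma flag_chain_chains x : is_flag x -> flag_chain x \in chains \top.
Proof.
move=> /is_flagP [_ rng mono]; rewrite inE; apply/andP; split.
  by apply/subsetP => _ /imsetP [j _ ->]; rewrite inE rng.
apply/is_chainP => _ _ /imsetP [j _ ->] /imsetP [j' _ ->].
by case: (ltngtP j j') => [/mono/ltW -> | /mono/ltW -> | /val_inj ->]; rewrite ?lexx ?orbT.
Qed.

Lemma rank_set_flag_chain x : is_flag x -> rank_set (flag_chain x) = A.
Proof.
move=> /is_flagP [rkx _ _]; apply/setP => i; rewrite inE.
apply/exists_inP/idP => [[_ /imsetP [j _ ->] /eqP]|iA].
  by rewrite rkx => /succn_inj /val_inj <-; apply: enum_valP.
exists (x (enum_rank_in iA i)); first exact: imset_f.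
by rewrite rkx enum_rankK_in.
Qed.

Lemma chain_flag C : C \in chains \top -> rank_set C = A ->
  exists2 x, is_flag x & C = flag_chain x.
Proof.
rewrite inE => /andP [/subsetP Crange /is_chainP chC] CA.
have hit (j : 'I_#|A|) : exists c, (c \in C) && (rk c == (enum_val j).+1).
  have : enum_val j \in rank_set C by rewrite CA enum_valP.
  by rewrite inE => /exists_inP [c cC rc]; exists c; rewrite cC.
pose x := [ffun j => xchoose (hit j)].
have xP (j : 'I_#|A|) : (x j \in C) && (rk (x j) == (enum_val j).+1).
  by rewrite ffunE; exact: (xchooseP (hit j)).
have in_range c : c \in C -> \bot < c < \top by move/Crange; rewrite inE.
exists x.
  apply/is_flagP; split=> [j|j|j j' jj'].
  - by case/andP: (xP j) => _ /eqP.
  - by case/andP: (xP j) => /in_range.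
  - case/andP: (xP j) (xP j') => xjC /eqP rj /andP [xj'C /eqP rj'].
    by apply: (comparable_rk_lt grk (chC _ _ xjC xj'C)); rewrite rj rj' ltnS enum_val_ltn.
apply/setP => c; apply/idP/imsetP => [cC|[j _ ->]]; last by case/andP: (xP j).
have /andP [c_gt_bot c_lt_top] := in_range c cC.
have rc_gt0 := rk_gt0 grk c_gt_bot.
have rc_le : ((rk c).-1 < n)%N by rewrite -ltnS prednK // -rk_top (rk_lt grk c_lt_top).
have iA : Ordinal rc_le \in A.
  by rewrite -CA inE; apply/exists_inP; exists c; rewrite //= prednK.
exists (enum_rank_in iA (Ordinal rc_le)) => //.
case/andP: (xP (enum_rank_in iA (Ordinal rc_le))) => xC /eqP rx.
apply: (comparable_rk_inj grk (chC _ _ cC xC)).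
by rewrite rx enum_rankK_in //= prednK.
Qed.

Lemma fS_rank_sets : fS rk A = #|[set C in chains \top | rank_set C == A]|.
Proof.
rewrite fS_flags -(card_in_imset (f := flag_chain)) => [|x x']; last first.
  by rewrite !inE; apply: flag_chain_inj.
apply: eq_card => C; apply/imsetP/idP => [[x]|].
  by rewrite inE => xF ->; rewrite inE flag_chain_chains ?rank_set_flag_chain ?eqxx.
rewrite inE => /andP [Cc /eqP CA]; have [x xF ->] := chain_flag Cc CA.
by exists x; rewrite ?inE.
Qed.

End FixedRankSet.

Lemma chain_weight_top C : chain_weight rk (rk \top) C = rank_weight (rank_set C).
Proof.
rewrite rk_top /chain_weight big_add1 /= big_mkord.
by apply: eq_bigr => i _; rewrite inE.
Qed.

Lemma chain_poly_top_rank_sets :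
  chain_poly rk \top = \sum_(A : {set 'I_n}) (fS rk A)%:R * rank_weight A.
Proof.
rewrite /chain_poly (eq_bigr _ (fun C _ => chain_weight_top C)).
rewrite (partition_big rank_set predT) //=; apply: eq_bigr => A _.
rewrite fS_rank_sets mulr_natl -sumr_const.
by apply: eq_big => [C|C /andP [_ /eqP ->]]; rewrite ?inE.
Qed.

End Flags.

Theorem mainTheorem3 (d : Order.disp_t) (T : finTBPOrderType d)
  (rk : T -> nat) (n : nat) :
  graded rk -> rk \top%O = n.+1 -> simplicial rk ->
  Theta (abindex rk n) = qfact n * hpoly rk n.
Proof.
move=> grk rk_top simp.
by rewrite Theta_abindex -(chain_poly_top_rank_sets grk rk_top) (chain_poly_top grk simp rk_top).
Qed.
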